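(* Let $I$ be an interpreted system of the propositional-action form described in the context, with proposition set $\Phi$, and let $\tilde\Phi\subseteq\Phi$. Let $\tilde I$ be the abstract interpreted system obtained from $I$ by hiding the propositions in $\Phi\setminus\tilde\Phi$, as described in the context. Then $\tilde I$ simulates $I$; specifically, the map $h:S\to\tilde S$, $h(s)=(h_i(l_i(s)))_{i\in\Omega}$, is a simulation relation between $I$ and $\tilde I$.
   Context: Interpreted systems, reachability, $\sim_i$ ($l_i(s)=l_i(s')$ and both states reachable) and simulation relations: an interpreted system is $\langle (L_i)_{i\in\Omega},(P_i),(ACT_i),S_0,\tau,\gamma\rangle$ with global states $S=\prod_i L_i$, joint actions, initial states $S_0$, interpretation $\gamma$, protocols and partial transition function $\tau$. A relation $H\subseteq S\times\tilde S$ is a simulation between $I$ and $\tilde I$ (same agents, $\tilde\Phi\subseteq\Phi$) if (1) every initial state of $I$ is related to some initial state of $\tilde I$, and for all $(s,\tilde s)\in H$: (2) $\gamma(s,p)=\tilde\gamma(\tilde s,p)$ for $p\in\tilde\Phi$; (3) whenever $\tau(\alpha,s)=s'$ there are $\tilde\alpha,\tilde s'$ with $\tilde\tau(\tilde\alpha,\tilde s)=\tilde s'$ and $(s',\tilde s')\in H$; (4) whenever $s\sim_i s'$ there is $\tilde s'$ with $\tilde s\sim_i\tilde s'$ and $(s',\tilde s')\in H$. Propositional-action form (this is the form of the interpreted systems the paper derives from access-control policies): $\Phi$ is a finite set of propositions partitioned into pairwise disjoint sets $\Phi_i$, $i\in\Omega$ (with $\Phi_e$ the environment's); each local state $l\in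 L_i$ is a valuation of $\Phi_i$, with local interpretation $\gamma_i(l,p)$, and $\gamma(s,p)=\gamma_i(l_i(s),p)$ for $p\in\Phi_i$. Each agent $i$ has a finite set of actions, each action $\alpha:\varepsilon\leftarrow\ell$ consisting of an identifier, a Boolean formula $\ell$ over $\Phi$ (the permission), and an effect $\varepsilon$, a set of signed propositions $+p$ / $-p$ (no proposition with both signs), plus the no-op $\Lambda$; $\mathbf{Ag}(\alpha)$ is the agent performing $\alpha$. Protocols allow all actions in every local state. The system is asynchronous: joint actions have at most one non-$\Lambda$ component, and are identified with that component. Writing $s[p\mapsto m]$ for the state equal to $s$ except that $p$ has value $m$, the symbolic transition is $\Theta_\alpha(st)=\{s[p\mapsto\top\mid +p\in\varepsilon][p\mapsto\bot\mid -p\in\varepsilon]\mid s\in st,\ (I,s)\models\ell\}$ and $\tau(\alpha,s)=s'$ iff $\Theta_\alpha(\{s\})=\{s'\}$. Abstraction: let $\tilde\Phi_i=\Phi_i\cap\tilde\Phi$. For $l_1,l_2\in L_i$, $l_1\Re_i l_2$ iff $\gamma_i(l_1,p)=\gamma_i(l_2,p)$ for all $p\in\tilde\Phi_i$; $h_i:L_i\to L_i/\Re_i$ is the quotient map. For a Boolean formula $f$ and proposition $x$, $\exists x.f:=f[\bot/x]\vee f[\top/x]$, extended to sets of propositions by iteration. Actions $\alpha':\varepsilon'\leftarrow\ell'$ and $\alpha:\varepsilon\leftarrow\ell$ are equivalent, $\alpha'\in[\alpha]$, iff $\{\pm p\in\varepsilon'\mid p\in\tilde\Phi\}=\{\pm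 p\in\varepsilon\mid p\in\tilde\Phi\}$, $\exists(\Phi\setminus\tilde\Phi).\ell'$ is logically equivalent to $\exists(\Phi\setminus\tilde\Phi).\ell$, and $\mathbf{Ag}(\alpha')=\mathbf{Ag}(\alpha)$. The abstract system $\tilde I$ has the same agents; $\tilde L_i=L_i/\Re_i$, $\tilde S=\prod_i\tilde L_i$; $\widetilde{ACT}_i=\{[\alpha]\mid \mathbf{Ag}(\alpha)=i\}$ (plus no-op), asynchronous, where $[\alpha]$ has evolution rule $\tilde\varepsilon\leftarrow\tilde\ell$ with $\tilde\varepsilon=\{\pm p\in\varepsilon\mid p\in\tilde\Phi\}$ and $\tilde\ell=\exists(\Phi\setminus\tilde\Phi).\ell$; $\tilde S_0=\{(h_i(l_i(s)))_{i\in\Omega}\mid s\in S_0\}$; $\tilde\gamma_i(h_i(l),p)=\gamma_i(l,p)$ for $p\in\tilde\Phi_i$ (propositions of $\tilde I$ are $\tilde\Phi$); protocols allow all actions; $\tilde\tau([\alpha],\tilde s)=\tilde s'$ iff $\tilde\Theta_{[\alpha]}(\{\tilde s\})=\{\tilde s'\}$, where $\tilde\Theta$ is defined like $\Theta$ using $\tilde\varepsilon,\tilde\ell$. *)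

From HB Require Import structures.
From mathcomp Require Import all_boot.
Set Implicit Arguments. Unset Strict Implicit. Unset Printing Implicit Defensive.

Inductive formula (Pr : Type) : Type :=
  | FVar of Pr
  | FTop
  | FBot
  | FNeg of formula Pr
  | FAnd of formula Pr & formula Pr
  | FOr of formula Pr & formula Pr.
Arguments FTop {Pr}. Arguments FBot {Pr}.

Fixpoint feval (Pr : Type) (v : Pr -> bool) (f : formula Pr) : bool :=
  match f with
  | FVar p => v p
  | FTop => true
  | FBot => false
  | FNeg g => ~~ feval v g
  | FAnd g h => feval v g && feval v h
  | FOr g h => feval v g || feval v h
  end.

Fixpoint fsubst (Pr : eqType) (x : Pr) (b : bool) (f : formula Pr) : formula Pr :=
  match f with
  | FVar p => if p == x then (if b then FTop else FBot) else FVar p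
  | FTop => FTop
  | FBot => FBot
  | FNeg g => FNeg (fsubst x b g)
  | FAnd g h => FAnd (fsubst x b g) (fsubst x b h)
  | FOr g h => FOr (fsubst x b g) (fsubst x b h)
  end.

Definition fexists (Pr : eqType) (x : Pr) (f : formula Pr) : formula Pr :=
  FOr (fsubst x false f) (fsubst x true f).

Definition fexists_set (Pr : finType) (X : {set Pr}) (f : formula Pr) : formula Pr :=
  foldr (@fexists Pr) f (enum X).

Definition fequiv (Pr : finType) (f g : formula Pr) : bool :=
  [forall v : {ffun Pr -> bool}, feval v f == feval v g].

(* trans a s s' is the graph of the partial transition function tau.   *)
(* Protocols are not represented: all systems considered here allow    *)
(* every action in every local state.                                  *)
Record isys (Ag Pr : Type) := ISys {
  Loc : Ag -> Type;
  JAct : Type;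
  init : (forall i, Loc i) -> Prop;
  trans : JAct -> (forall i, Loc i) -> (forall i, Loc i) -> Prop;
  gam : (forall i, Loc i) -> Pr -> bool }.
Arguments Loc {Ag Pr} i _.
Arguments JAct {Ag Pr} i.
Arguments init {Ag Pr} i _.
Arguments trans {Ag Pr} i _ _ _.
Arguments gam {Ag Pr} i _ _.

Definition gst (Ag Pr : Type) (I : isys Ag Pr) := forall i, Loc I i.

Inductive reachable (Ag Pr : Type) (I : isys Ag Pr) : gst I -> Prop :=
  | reach_init s : init I s -> @reachable Ag Pr I s
  | reach_step s a s' : @reachable Ag Pr I s -> trans I a s s' -> @reachable Ag Pr I s'.
Arguments reachable {Ag Pr} I _.

Definition indist (Ag Pr : Type) (I : isys Ag Pr) (i : Ag) (s s' : gst I) : Prop :=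
  s i = s' i /\ reachable I s /\ reachable I s'.
Arguments indist {Ag Pr} I i s s'.

(* H is a simulation between I and J; the propositions of J are embedded
   into those of I by emb (J's proposition set is a subset of I's). *)
Definition simulation {Ag PrI PrJ : Type} (I : isys Ag PrI) (J : isys Ag PrJ)
    (emb : PrJ -> PrI) (H : gst I -> gst J -> Prop) : Prop :=
  (forall s, init I s -> exists t, init J t /\ H s t) /\
  (forall s t, H s t ->
     (forall p : PrJ, gam I s (emb p) = gam J t p) /\
     (forall a s', trans I a s s' -> exists b t', trans J b t t' /\ H s' t') /\
     (forall i s', indist I i s s' -> exists t', indist J i t t' /\ H s' t')).

Section PropAction.
Variables (Ag Pr A : finType) (own : Pr -> Ag).
(* holds a v : the permission of action a is satisfied by valuation v *)
Variable holds : A -> (Pr -> bool) -> bool.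
(* effect of a: effp a = {p | +p in eps}, effn a = {p | -p in eps} *)
Variables effp effn : A -> {set Pr}.

Definition PLoc (i : Ag) := {ffun {p : Pr | own p == i} -> bool}.
Definition PState := forall i, PLoc i.

Definition pgam (s : PState) (p : Pr) : bool :=
  s (own p) (exist (fun q => own q == own p) p (eqxx (own p))).

(* joint actions: None = the all-no-op joint action (Lambda), Some a = a *)
Definition holdsO (o : option A) (v : Pr -> bool) : bool :=
  if o is Some a then holds a v else true.
Definition effpO (o : option A) : {set Pr} := if o is Some a then effp a else set0.
Definition effnO (o : option A) : {set Pr} := if o is Some a then effn a else set0.

Definition pupd (o : option A) (s : PState) : PState :=
  fun i => [ffun q => if val q \in effnO o then false
                      else if val q \in effpO o then true else s i q].

Definition Theta (o : option A) (st : PState -> Prop) : PState -> Prop :=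
  fun s' => exists s, st s /\ holdsO o (pgam s) /\ s' = pupd o s.

Definition ptau (o : option A) (s s' : PState) : Prop :=
  forall x, Theta o (fun y => y = s) x <-> x = s'.

Definition mkIS (init0 : PState -> Prop) : isys Ag Pr :=
  {| Loc := PLoc; JAct := option A; init := init0; trans := ptau; gam := pgam |}.
End PropAction.

Section Abstraction.
Variables (Ag Pr A : finType) (own : Pr -> Ag) (agent : A -> Ag)
  (perm : A -> formula Pr) (effp effn : A -> {set Pr})
  (init0 : PState own -> Prop) (Phit : {set Pr}).

Definition Iconc : isys Ag Pr :=
  @mkIS Ag Pr A own (fun a v => feval v (perm a)) effp effn init0.

Definition ltil (a : A) : formula Pr := fexists_set (~: Phit) (perm a).

Definition aequiv (a' a : A) : bool :=
  [&& effp a' :&: Phit == effp a :&: Phit,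
      effn a' :&: Phit == effn a :&: Phit,
      fequiv (ltil a') (ltil a) & agent a' == agent a].

Definition acls (a : A) : {set A} := [set a' | aequiv a' a].

Definition AAct : finType := {C : {set A} | [exists a, C == acls a]}.
Definition arep (C : AAct) : A := xchoose (elimT existsP (valP C)).
Definition aagent (C : AAct) : Ag := agent (arep C).

Definition PrT : finType := {p : Pr | p \in Phit}.
Definition ownT (q : PrT) : Ag := own (val q).

Definition holdsT (C : AAct) (v : PrT -> bool) : bool :=
  feval (fun p => odflt false (omap v (insub p))) (ltil (arep C)).
Definition effpT (C : AAct) : {set PrT} := [set q : PrT | val q \in effp (arep C)].
Definition effnT (C : AAct) : {set PrT} := [set q : PrT | val q \in effn (arep C)].

(* L_i/R_i is
   represented canonically by the valuations of tilde Phi_i (R_i relates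
   exactly the local states with equal restriction to tilde Phi_i), and h_i
   is the restriction map. *)
Definition hmap (s : PState own) : PState ownT :=
  fun i => [ffun q => s i (exist (fun p => own p == i) (val (val q)) (valP q))].

Definition initT (t : PState ownT) : Prop := exists s, init0 s /\ t = hmap s.

Definition Iabs : isys Ag PrT := @mkIS Ag PrT AAct ownT holdsT effpT effnT initT.
End Abstraction.
Arguments Iconc {Ag Pr A} own perm effp effn init0.
Arguments Iabs {Ag Pr A} own agent perm effp effn init0 Phit.
Arguments hmap {Ag Pr} own Phit s.
Arguments PrT {Pr} Phit.
Arguments simulation {Ag PrI PrJ} I J emb H.

From HB Require Import structures.
From mathcomp Require Import all_boot.
From Stdlib Require Import FunctionalExtensionality.
Set Implicit Arguments. Unset Strict Implicit. Unset Printing Implicit Defensive.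

(* Hence every concrete transition s -> s' by a yields
     the abstract transition h(s) -> h(s') by [a] (or by the no-op), and by
     induction h maps reachable states to reachable states.
   The simulation clauses then follow: initial states and valuations by
   construction of tilde I, transitions by the step lemma, and s ~_i s'
   implies h(s) ~_i h(s') because h acts agentwise and preserves
   reachability. *)

Lemma feval_ext (Pr : Type) (v w : Pr -> bool) (f : formula Pr) :
  v =1 w -> feval v f = feval w f.
Proof. by move=> evw; elim: f => //= [g ->|g -> h ->|g -> h ->]. Qed.

Definition vupd (Pr : eqType) (w : Pr -> bool) (x : Pr) (b : bool) : Pr -> bool :=
  fun p => if p == x then b else w p.

Lemma feval_fsubst (Pr : eqType) (w : Pr -> bool) (x : Pr) (b : bool) f :
  feval w (fsubst x b f) = feval (vupd w x b) f.
Proof.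
elim: f => //= [p|g ->|g -> h ->|g -> h ->] //.
by rewrite /vupd; case: (p == x); case: b.
Qed.

Lemma feval_foldr_fexists (Pr : eqType) (l : seq Pr) f (v w : Pr -> bool) :
  (forall p, p \notin l -> v p = w p) ->
  feval v f -> feval w (foldr (@fexists Pr) f l).
Proof.
elim: l w => [|x l IH] w evw fv /=.
  by rewrite -(feval_ext f (v := v)) // => p; apply: evw.
rewrite /fexists /= !feval_fsubst.
have closure_x : feval (vupd w x (v x)) (foldr (@fexists Pr) f l).
  apply: IH fv => p pl; rewrite /vupd; case: eqP => [->//|/eqP px].
  by apply: evw; rewrite in_cons negb_or px.
by case: (v x) closure_x => ->; rewrite ?orbT.
Qed.

Lemma feval_fexists_set (Pr : finType) (X : {set Pr}) f (v w : Pr -> bool) :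
  (forall p, p \notin X -> v p = w p) -> feval v f -> feval w (fexists_set X f).
Proof. by move=> evw; apply: feval_foldr_fexists => p; rewrite mem_enum; apply: evw. Qed.

Lemma fequiv_feval (Pr : finType) (f g : formula Pr) (v : Pr -> bool) :
  fequiv f g -> feval v f = feval v g.
Proof.
move=> /forallP /(_ [ffun p => v p]) /eqP.
by rewrite !(@feval_ext _ [ffun p => v p] v) // => p; rewrite ffunE.
Qed.

Lemma mem_setI_agree (T : finType) (A B C : {set T}) (x : T) :
  A :&: C = B :&: C -> x \in C -> (x \in A) = (x \in B).
Proof. by move=> eABC xC; have := congr1 (fun D : {set T} => x \in D) eABC; rewrite /= !in_setI xC !andbT. Qed.

Lemma ptauP (Ag Pr A : finType) (own : Pr -> Ag) holds (ep en : A -> {set Pr})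
    (o : option A) (s s' : PState own) :
  ptau holds ep en o s s' <-> holdsO holds o (pgam s) /\ s' = pupd ep en o s.
Proof.
split.
  by move=> tau; case: ((tau s').2 erefl) => y [-> [permitted ->]].
move=> [permitted ->] x; split; first by case=> y [-> [_ ->]].
by move=> ->; exists s.
Qed.

Section Abstraction.
Variables (Ag Pr A : finType) (own : Pr -> Ag) (agent : A -> Ag)
  (perm : A -> formula Pr) (effp effn : A -> {set Pr})
  (init0 : PState own -> Prop) (Phit : {set Pr}).

Local Notation I := (Iconc own perm effp effn init0).
Local Notation It := (Iabs own agent perm effp effn init0 Phit).
Local Notation h := (hmap own Phit).
Local Notation AAct := (AAct agent perm effp effn Phit).
Local Notation effp_abs := (@effpT Ag Pr A agent perm effp effn Phit).
Local Notation effn_abs := (@effnT Ag Pr A agent perm effp effn Phit).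

Lemma pgam_hmap (s : PState own) (q : PrT Phit) : pgam (h s) q = pgam s (val q).
Proof. by rewrite /pgam /hmap ffunE /=; congr (s _ _); apply: val_inj. Qed.

Definition aclass (a : A) : AAct :=
  exist _ (acls agent perm effp effn Phit a)
    (introT existsP (ex_intro (fun a' => acls agent perm effp effn Phit a ==
                                         acls agent perm effp effn Phit a') a (eqxx _))).

Lemma aequiv_refl (a : A) : aequiv agent perm effp effn Phit a a.
Proof. by rewrite /aequiv !eqxx /= andbT; apply/forallP => v. Qed.

Lemma arep_aclass (a : A) : aequiv agent perm effp effn Phit (arep (aclass a)) a.
Proof.
have /eqP rep_cls := xchooseP (elimT existsP (valP (aclass a))).
rewrite /arep; set a' := xchoose _ in rep_cls *.
have : a' \in val (aclass a) by rewrite rep_cls inE aequiv_refl.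
by rewrite inE.
Qed.

Lemma hmap_pupd (o : option A) (ot : option AAct) (s : PState own) :
  (forall q : PrT Phit, (q \in effpO effp_abs ot) =
                        (val q \in effpO effp o)) ->
  (forall q : PrT Phit, (q \in effnO effn_abs ot) =
                        (val q \in effnO effn o)) ->
  h (pupd effp effn o s) = pupd effp_abs effn_abs ot (h s).
Proof.
move=> agree_p agree_n; apply: functional_extensionality_dep => i.
by apply/ffunP => q; rewrite /pupd /hmap !ffunE agree_p agree_n.
Qed.

(* The abstract permission of [a] is implied by the concrete one of a:
   tilde ell hides Phi \ tilde Phi, and the representative of [a] has an
   equivalent tilde ell. *)
Lemma holdsT_aclass (a : A) (s : PState own) :
  feval (pgam s) (perm a) -> holdsT (aclass a) (pgam (h s)).
Proof.
move=> permitted; have /and4P [_ _ eq_ltil _] := arep_aclass a.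
rewrite /holdsT (fequiv_feval _ eq_ltil).
apply: feval_fexists_set permitted => p; rewrite inE negbK => pPhit.
by rewrite insubT /= pgam_hmap.
Qed.

Lemma hmap_step (o : option A) (s s' : PState own) :
  trans I o s s' -> exists ot, trans It ot (h s) (h s').
Proof.
move=> /ptauP [permitted ->].
case: o permitted => [a|] permitted; last first.
  exists None; apply/ptauP; split=> //.
  by apply: hmap_pupd => q; rewrite /= !inE.
exists (Some (aclass a)); apply/ptauP; split; first exact: holdsT_aclass.
have /and4P [/eqP eff_p /eqP eff_n _ _] := arep_aclass a.
by apply: hmap_pupd => q; rewrite /= inE; apply: mem_setI_agree (valP q).
Qed.

Lemma hmap_reachable (s : PState own) : reachable I s -> reachable It (h s).
Proof.
elim=> [s0 init_s0|s0 o s1 _ reach_s0 tau].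
  by apply: reach_init; exists s0.
have [ot taut] := hmap_step tau.
exact: reach_step reach_s0 taut.
Qed.

End Abstraction.

Theorem proposition2 (Ag Pr A : finType) (own : Pr -> Ag) (agent : A -> Ag)
  (perm : A -> formula Pr) (effp effn : A -> {set Pr})
  (init0 : PState own -> Prop) (Phit : {set Pr}) :
  (forall a : A, [disjoint effp a & effn a]) ->
  simulation (Iconc own perm effp effn init0)
             (Iabs own agent perm effp effn init0 Phit)
             (fun q : PrT Phit => val q)
             (fun s t => t = hmap own Phit s).
Proof.
move=> _; split.
  by move=> s init_s; exists (hmap own Phit s); split => //; exists s.
move=> s _ ->; split; [|split].
- by move=> q; rewrite /= pgam_hmap.
- move=> o s' tau; have [ot taut] := hmap_step agent Phit tau.
  by exists ot, (hmap own Phit s').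
- move=> i s' [same_i [reach_s reach_s']]; exists (hmap own Phit s'); split=> //.
  split; first by rewrite /hmap /= same_i.
  by split; apply: hmap_reachable.
Qed.
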